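(* Let $U_5=(\mathbb{N},F_5)$ where $F_5=\{f_i:i\in\mathbb{N}\setminus\{0\}\}$ and, for $i\ge1$, $j\in\mathbb{N}$, $f_i(j)=1$ if $i=j$ and $f_i(j)=0$ if $i\ne j$. Then $\operatorname{typ}_u(Tab(U_5),h)=t_5$, where $h$ is the depth and $t_5$ is the table with rows (indexed $i,d,a$; entries in columns $i,d,a$) $(\gamma,\epsilon,\epsilon)$, $(\gamma,\gamma,\gamma)$, $(\gamma,\gamma,\gamma)$.
   Context: Let $\mathbb{N}=\{0,1,2,\dots\}$; for $k\ge 2$, $E_k=\{0,\dots,k-1\}$; $\mathcal{P}(\mathbb{N})$ is the set of nonempty finite subsets of $\mathbb{N}$. For a nonempty set $F$, a decision table $T\in\mathcal{M}_k(F)$ is a rectangular table with $n\ge1$ columns labeled with attributes $f_1,\dots,f_n\in F$ (columns with the same label are equal), whose rows are pairwise different tuples in $E_k^n$ (possibly none), each row labeled with a set from $\mathcal{P}(\mathbb{N})$; $At(T)=\{f_1,\dots,f_n\}$, $\Delta(T)$ the set of rows; for a word $\alpha=(f_{i_1},\delta_1)\cdots(f_{i_m},\delta_m)$, $T\alpha$ is the subtable of rows with value $\delta_j$ in column $f_{i_j}$ for all $j$. Information system: $U=(A,F)$ with $A$ nonempty and $F$ a nonempty set of functions $A\to E_k$ (here $k=2$). A problem over $U$ is $z=(\nu,f_1,\dots,f_n)$ with $n\ge1$, $\nu:E_k^n\to\mathcal{P}(\mathbb{N})$, $f_1,\dots,f_n\in F$. Its table $T(z)\in\mathcal{M}_k(F)$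 has columns labeled $f_1,\dots,f_n$; $\bar\delta\in E_k^n$ is a row iff there is $x\in A$ with $f_j(x)=\delta_j$ for all $j$, and it is labeled $\nu(\bar\delta)$. $Tab(U)=\{T(z): z \text{ a problem over } U\}$ (a closed class, i.e. closed under removal of columns (keeping the first of equal rows), arbitrary changing of decision sets, permutation and duplication of columns). Decision trees over $\mathcal{M}_k(F)$: finite rooted directed trees with at least two nodes; root and edges leaving the root unlabeled; worker nodes (neither root nor terminal) labeled by attributes in $F$; edges leaving worker nodes labeled by elements of $E_k$; terminal nodes labeled by numbers in $\mathbb{N}$. For a complete path $\xi$, $\pi(\xi)$ is the word of pairs (attribute of worker node, label of leaving edge) along $\xi$, $\varphi(\xi)$ the word of those attributes, $\tau(\xi)$ the terminal label. A nondeterministic decision tree for $T$ uses only attributes in $At(T)$, satisfies $\bigcup_\xi\Delta(T\pi(\xi))=\Delta(T)$, and for every row $r\in\Delta(T\pi(\xi))$, $\tau(\xi)$ lies in the decision set of $r$. It is deterministic if exactly one edge leaves the root and edges leaving each worker node have distinct labels. The depth of a word is its length $h(\alpha)=|\alpha|$; $h(\Gamma)=\max_\xi h(\varphi(\xi))$. For $T$ with columns $f_1,\dots,f_n$: $h^i(T)=n$, $h^d(T)$ and $h^a(T)$ are the minimum depths of deterministic, respectively nondeterministic, decision trees for $T$. For $b,c\in\{i,d,a\}$ and a class $\mathcal{C}$, $\mathcal{U}^{bc}_{\mathcal{C}h}(n)=\max\{h^b(T):T\in\mathcal{C},h^c(T)\le n\}$ (defined iff this set is nonempty and finite). For a partial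 $g:\mathbb{N}\to\mathbb{N}$, $\mathrm{Dom}^+(g)=\{n\in\mathrm{Dom}(g):g(n)\ge n\}$, $\mathrm{Dom}^-(g)=\{n\in\mathrm{Dom}(g):g(n)\le n\}$; $\operatorname{typ}(g)$ is $\alpha$ if $\mathrm{Dom}(g)$ is infinite and $g$ bounded above; $\beta$ if $\mathrm{Dom}(g)$ infinite, $\mathrm{Dom}^+(g)$ finite, $g$ unbounded; $\gamma$ if $\mathrm{Dom}^+(g)$ and $\mathrm{Dom}^-(g)$ are infinite; $\delta$ if $\mathrm{Dom}(g)$ infinite and $\mathrm{Dom}^-(g)$ finite; $\epsilon$ if $\mathrm{Dom}(g)$ finite. $\operatorname{typ}_u(\mathcal{C},h)$ is the $3\times3$ table (rows and columns indexed $i,d,a$) with entry $\operatorname{typ}(\mathcal{U}^{bc}_{\mathcal{C}h})$ in row $b$, column $c$. *)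

(* Decision tables over information systems with k = 2
   (E_2 = bool: false = 0, true = 1), decision trees, depth measures,
   the functions U^{bc}_{C h} and their types. *)
From mathcomp Require Import all_boot.

Set Implicit Arguments.
Unset Strict Implicit.
Unset Printing Implicit Defensive.

(* A tree is the (unlabelled) root together with the list of nodes  *)
(* reached by the (unlabelled) edges leaving the root.              *)
Inductive dnode (Attr : Type) : Type :=
| Term of nat
| Work of Attr & seq (bool * dnode Attr).

Arguments Term {Attr} _.

Definition dtree (Attr : Type) := seq (dnode Attr).

Section Trees.
Variable Attr : eqType.

Fixpoint wf_node (t : dnode Attr) : bool :=
  match t with
  | Term _ => true
  | Work _ ch =>
      (0 < size ch) &&
      (fix go (l : seq (bool * dnode Attr)) : bool :=
         match l with [::] => true | (_, c) :: l' => wf_node c && go l' end) ch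
  end.

(* finite rooted tree with at least two nodes *)
Definition wf_tree (G : dtree Attr) : bool := (0 < size G) && all wf_node G.

Fixpoint det_node (t : dnode Attr) : bool :=
  match t with
  | Term _ => true
  | Work _ ch =>
      uniq (map fst ch) &&
      (fix go (l : seq (bool * dnode Attr)) : bool :=
         match l with [::] => true | (_, c) :: l' => det_node c && go l' end) ch
  end.

(* deterministic: exactly one edge leaves the root *)
Definition det_tree (G : dtree Attr) : bool := (size G == 1) && all det_node G.

Fixpoint node_attrs (t : dnode Attr) : seq Attr :=
  match t with
  | Term _ => [::]
  | Work a ch =>
      a :: (fix go (l : seq (bool * dnode Attr)) : seq Attr :=
              match l with [::] => [::] | (_, c) :: l' => node_attrs c ++ go l' end) ch
  end.

Definition tree_attrs (G : dtree Attr) : seq Attr := flatten (map node_attrs G).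

(* complete paths from a node to a terminal node: the word pi(xi) of
   pairs (attribute, edge label) and the terminal label tau(xi) *)
Fixpoint node_paths (t : dnode Attr) : seq (seq (Attr * bool) * nat) :=
  match t with
  | Term m => [:: ([::], m)]
  | Work a ch =>
      (fix go (l : seq (bool * dnode Attr)) : seq (seq (Attr * bool) * nat) :=
         match l with
         | [::] => [::]
         | (b, c) :: l' =>
             [seq ((a, b) :: p.1, p.2) | p <- node_paths c] ++ go l'
         end) ch
  end.

Definition tree_paths (G : dtree Attr) : seq (seq (Attr * bool) * nat) :=
  flatten (map node_paths G).

Definition depth (G : dtree Attr) : nat :=
  \max_(p <- tree_paths G) size p.1.

(* Decision tables: columns labelled by attributes, a set of rows   *)
(* (tuples in E_2^n, given as a predicate), and the decision sets   *)
(* (finite subsets of N given as sequences; for tables of problems  *)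
(* they are nonempty).                                              *)
Record table := Table {
  cols : seq Attr;
  rowp : seq bool -> Prop;
  dec  : seq bool -> seq nat }.

(* value of row r in (the first) column labelled f *)
Definition rval (T : table) (r : seq bool) (f : Attr) : bool :=
  nth false r (index f (cols T)).

Definition in_sub (T : table) (alpha : seq (Attr * bool)) (r : seq bool) : Prop :=
  rowp T r /\ all (fun fd => rval T r fd.1 == fd.2) alpha.

Definition tree_for (T : table) (G : dtree Attr) : Prop :=
  wf_tree G /\
  {subset tree_attrs G <= cols T} /\
  (forall r, rowp T r -> exists2 p, p \in tree_paths G & in_sub T p.1 r) /\
  (forall p, p \in tree_paths G -> forall r, in_sub T p.1 r -> p.2 \in dec T r).

Inductive measure := Mi | Md | Ma.

Definition hval (b : measure) (T : table) (m : nat) : Prop :=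
  match b with
  | Mi => m = size (cols T)
  | Md => (exists G, [/\ det_tree G, tree_for T G & depth G = m]) /\
          (forall G, det_tree G -> tree_for T G -> m <= depth G)
  | Ma => (exists G, tree_for T G /\ depth G = m) /\
          (forall G, tree_for T G -> m <= depth G)
  end.

End Trees.

(* Information systems U = (A, F) with k = 2: F is represented by   *)
(* the attribute type Attr with evaluation ev : Attr -> A -> bool.  *)
Section Problems.
Variables (A : Type) (Attr : eqType) (ev : Attr -> A -> bool).

Record problem := Problem { pattrs : seq Attr; pnu : seq bool -> seq nat }.

Definition valid_problem (z : problem) : Prop :=
  (0 < size (pattrs z))%N /\
  forall d : seq bool, size d = size (pattrs z) -> pnu z d != [::].

Definition tab_of (z : problem) : table Attr :=
  {| cols := pattrs z;
     rowp := fun d => exists x : A, d = [seq ev f x | f <- pattrs z];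
     dec  := pnu z |}.

Definition Uset (b c : measure) (n w : nat) : Prop :=
  exists z, [/\ valid_problem z, hval b (tab_of z) w &
                exists2 m, hval c (tab_of z) m & m <= n].

(* graph of the partial function U^{bc}_{Tab(U) h}: defined at n iff
   S(n) is nonempty and finite, with value max S(n) *)
Definition Ufun (b c : measure) (n v : nat) : Prop :=
  Uset b c n v /\ forall w, Uset b c n w -> w <= v.

End Problems.

Definition infinite_nat (S : nat -> Prop) : Prop := forall N, exists2 n, N <= n & S n.
Definition finite_nat (S : nat -> Prop) : Prop := exists N, forall n, S n -> n < N.

Section Types.
Variable g : nat -> nat -> Prop.
Definition Dom n := exists v, g n v.
Definition DomP n := exists2 v, g n v & n <= v.
Definition DomM n := exists2 v, g n v & v <= n.
Definition bounded := exists B, forall n v, g n v -> v <= B.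
End Types.

Inductive typ := Talpha | Tbeta | Tgamma | Tdelta | Tepsilon.

Definition has_typ (g : nat -> nat -> Prop) (t : typ) : Prop :=
  match t with
  | Talpha => infinite_nat (Dom g) /\ bounded g
  | Tbeta => [/\ infinite_nat (Dom g), finite_nat (DomP g) & ~ bounded g]
  | Tgamma => infinite_nat (DomP g) /\ infinite_nat (DomM g)
  | Tdelta => infinite_nat (Dom g) /\ finite_nat (DomM g)
  | Tepsilon => finite_nat (Dom g)
  end.

Definition attr5 := {i : nat | (0 < i)%N}.
Definition ev5 (f : attr5) (j : nat) : bool := sval f == j.

Definition U5 (b c : measure) : nat -> nat -> Prop := Ufun ev5 b c.

Definition t5 (b c : measure) : typ :=
  match b, c with
  | Mi, Mi => Tgamma
  | Mi, _ => Tepsilon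
  | _, _ => Tgamma
  end.

From mathcomp Require Import all_boot.

(* In U_5 the row of a point x in T(z) has at most one 1, namely in the
   column f_x, and the row of the point 0 is all 0s.
   Take any decision tree for T(z) and the path followed by the all-0 row.
   Query the attributes of that path one after the other, stopping at the
   first 1: a 1 at f_x identifies the row (hence a correct decision), and a
   row with only 0s on these attributes follows the same path as the all-0
   row, so the decision at its end is correct.  This deterministic tree is no
   deeper than the original one, so h^d <= h^a (and h^d <= h^i using all
   columns).  The problem "is one of f_1, ..., f_n equal to 1?" has
   h^i = h^d = h^a = n, so U^{bc}(n) = n for n >= 1 whenever b is d or a or
   b = c = i.  For b = i and c in {d, a}, repeating one column arbitrarily
   often with a constant decision gives unbounded h^i at h^c = 0, so U^{ic} is
   nowhere defined. *)

Set Implicit Arguments.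
Unset Strict Implicit.
Unset Printing Implicit Defensive.

Section DecisionTrees.
Variable Attr : eqType.
Implicit Types (T : table Attr) (G : dtree Attr).

Lemma path_size_le_depth G p : p \in tree_paths G -> size p.1 <= depth G.
Proof. by move=> pG; rewrite /depth (leq_bigmax_seq (F := fun p => size p.1) p). Qed.

Lemma hval_functional b T w m : hval b T w -> hval b T m -> w = m.
Proof.
case: b => /=; first by move=> -> ->.
- move=> [[G [dG GT <-]] minG] [[G' [dG' G'T <-]] minG'].
  by apply/eqP; rewrite eqn_leq minG // minG'.
- move=> [[G [GT <-]] minG] [[G' [G'T <-]] minG'].
  by apply/eqP; rewrite eqn_leq minG // minG'.
Qed.

Lemma hval_le_det_depth b T w G :
  b <> Mi -> hval b T w -> det_tree G -> tree_for T G -> w <= depth G.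
Proof. by case: b => //= _ [_ minG] dG GT; apply: minG. Qed.

Lemma in_sub_agree T alpha r r' :
  in_sub T alpha r -> rowp T r' -> {in map fst alpha, rval T r' =1 rval T r} ->
  in_sub T alpha r'.
Proof.
move=> [_ /allP alpha_r] r'T agree; split=> //; apply/allP => fd fd_alpha.
by rewrite agree ?alpha_r ?(map_f fst).
Qed.

Lemma tree_for_const T t :
  (forall r, rowp T r -> t \in dec T r) -> tree_for T [:: Term t].
Proof.
move=> tT; split=> //; split=> //; split.
- by move=> r rT; exists ([::], t); rewrite ?mem_head.
- by move=> p; rewrite /tree_paths /= inE => /eqP -> r [/tT].
Qed.

Lemma depth_const t : depth [:: @Term Attr t] = 0.
Proof. by rewrite /depth /tree_paths /= big_seq1. Qed.

Fixpoint query_chain (dj : Attr -> nat) (t : nat) (L : seq Attr) : dnode Attr :=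
  match L with
  | [::] => Term t
  | a :: L' => Work a [:: (true, Term (dj a)); (false, query_chain dj t L')]
  end.

Variables (dj : Attr -> nat) (t : nat).

Lemma query_chain_wf L : wf_node (query_chain dj t L) && det_node (query_chain dj t L).
Proof. by elim: L => //= a L /andP [-> ->]. Qed.

Lemma query_chain_attrs L : node_attrs (query_chain dj t L) = L.
Proof. by elim: L => //= a L ->; rewrite cats0. Qed.

Lemma query_chain_path_size L p :
  p \in node_paths (query_chain dj t L) -> size p.1 <= size L.
Proof.
elim: L p => [|a L IHL] p /=; first by rewrite inE => /eqP ->.
by rewrite inE cats0 => /orP [/eqP -> // | /mapP [q /IHL ? ->]].
Qed.

Lemma query_chain_cover T L r :
  rowp T r -> exists2 p, p \in node_paths (query_chain dj t L) & in_sub T p.1 r.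
Proof.
move=> rT; elim: L => [|a L [q qL [_ q_r]]] /=; first by exists ([::], t); rewrite ?mem_head.
case ra: (rval T r a); first by exists ([:: (a, true)], dj a); rewrite /in_sub /= ?ra ?mem_head.
exists ((a, false) :: q.1, q.2); last by rewrite /in_sub /= ra q_r.
by rewrite inE cats0 (map_f (fun p => ((a, false) :: p.1, p.2)) qL) orbT.
Qed.

Lemma query_chain_sound T L :
  (forall a r, a \in L -> rowp T r -> rval T r a -> dj a \in dec T r) ->
  (forall r, rowp T r -> all (fun a => ~~ rval T r a) L -> t \in dec T r) ->
  forall p, p \in node_paths (query_chain dj t L) ->
  forall r, in_sub T p.1 r -> p.2 \in dec T r.
Proof.
elim: L T => [|a L IHL] T djT tT p /=.
  by rewrite inE => /eqP -> r [rT _]; apply: tT.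
rewrite inE cats0 => /orP [/eqP -> | /mapP [q qL ->]] r [rT] /=.
  by rewrite andbT => /eqP ra; apply: djT; rewrite ?mem_head.
case/andP => /eqP ra q_r.
(* Below the 0-edge of [a] the rest of the chain only sees rows with a 0 at [a]. *)
pose Ta := Table (cols T) (fun r => rowp T r /\ rval T r a = false) (dec T).
apply: (IHL Ta _ _ q qL r) => //.
- by move=> a' r' a'L [r'T _]; apply: djT; rewrite // inE a'L orbT.
- by move=> r' [r'T r'a] r'L; apply: tT; rewrite //= r'a.
Qed.

Lemma query_chain_correct T L :
  {subset L <= cols T} ->
  (forall a r, a \in L -> rowp T r -> rval T r a -> dj a \in dec T r) ->
  (forall r, rowp T r -> all (fun a => ~~ rval T r a) L -> t \in dec T r) ->
  [/\ det_tree [:: query_chain dj t L], tree_for T [:: query_chain dj t L]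
    & depth [:: query_chain dj t L] <= size L].
Proof.
move=> LT djT tT; have paths : tree_paths [:: query_chain dj t L] =
  node_paths (query_chain dj t L) by rewrite /tree_paths /= cats0.
have /andP [wfL detL] := query_chain_wf L.
split; first by rewrite /det_tree /= detL.
- rewrite /tree_for /wf_tree /tree_attrs /= wfL cats0 query_chain_attrs paths.
  do !split=> //; [exact: query_chain_cover | exact: query_chain_sound].
- by rewrite /depth paths; apply/bigmax_leqP_seq => p /query_chain_path_size.
Qed.

End DecisionTrees.

Section InformationSystems.
Variables (A : Type) (Attr : eqType) (ev : Attr -> A -> bool).

Lemma Ufun_diag b c n :
  (exists2 z, valid_problem z & hval b (tab_of ev z) n /\ hval c (tab_of ev z) n) ->
  (forall z w m, valid_problem z ->
     hval b (tab_of ev z) w -> hval c (tab_of ev z) m -> w <= m) ->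
  Ufun ev b c n n.
Proof.
move=> [z zP [bn cn]] hb_le_hc; split; first by exists z; split=> //; exists n.
by move=> w [z' [z'P bw [m cm le_mn]]]; apply: leq_trans (hb_le_hc _ _ _ z'P bw cm) le_mn.
Qed.

Lemma Ufun_i_undef (f : Attr) c n v : c <> Mi -> ~ Ufun ev Mi c n v.
Proof.
move=> cNi [_ maxv].
pose z := Problem (nseq v.+1 f) (fun _ => [:: 0]).
have hc0 : hval c (tab_of ev z) 0.
  have zT := @tree_for_const _ (tab_of ev z) 0 (fun r _ => mem_head 0 [::]).
  by case: c cNi {maxv} => //= _; split=> [|G _]; do ?exists [:: Term 0]; rewrite ?depth_const.
suff : v.+1 <= v by rewrite ltnn.
by apply: maxv; exists z; split=> //=; rewrite ?size_nseq //; exists 0.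
Qed.

End InformationSystems.

Lemma gamma_of_diag (g : nat -> nat -> Prop) :
  (forall n, 0 < n -> g n n) -> has_typ g Tgamma.
Proof. by move=> gnn; split=> N; exists N.+1 => //; exists N.+1 => //; apply: gnn. Qed.

Section U5.
Implicit Types (z : problem attr5) (a : attr5) (x : nat).

Local Notation T5 z := (tab_of ev5 z).
Local Notation row z x := [seq ev5 f x | f <- pattrs z].

Lemma ev5_0 (f : attr5) : ev5 f 0 = false.
Proof. by case: f => [[|i] i_gt0]. Qed.

Lemma rval_row5 z x a : rval (T5 z) (row z x) a = (a \in pattrs z) && ev5 a x.
Proof.
rewrite /rval /=; have [a_z | a_z] := boolP (a \in pattrs z).
  by rewrite (nth_map a) ?index_mem ?nth_index.
by rewrite nth_default // size_map memNindex.
Qed.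

Definition answer (z : problem attr5) r := head 0 (pnu z r).

Lemma answer_valid z x : valid_problem z -> answer z (row z x) \in pnu z (row z x).
Proof.
by case=> _ nonempty; rewrite /answer -nth0 mem_nth // lt0n size_eq0 nonempty // size_map.
Qed.

Lemma det_tree_of_zero_path z alpha t :
  valid_problem z -> in_sub (T5 z) alpha (row z 0) ->
  (forall r, in_sub (T5 z) alpha r -> t \in pnu z r) ->
  exists G, [/\ det_tree G, tree_for (T5 z) G & depth G <= size alpha].
Proof.
(* A 1 at [a] identifies the row of [sval a]; a row with only 0s on [L]
   agrees with the all-0 row on every attribute of [alpha]. *)
move=> zP alpha0 alpha_t; pose L := [seq a <- map fst alpha | a \in pattrs z].
have [|||detG GT dG] := @query_chain_correct _ (fun a => answer z (row z (sval a))) t (T5 z) L.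
- by move=> a; rewrite mem_filter => /andP [].
- by move=> a _ _ [x ->]; rewrite rval_row5 => /andP [_ /eqP ->]; apply: answer_valid.
- move=> r rT rL; apply: alpha_t; apply: (in_sub_agree alpha0 rT) => f f_alpha.
  rewrite [rval _ (row z 0) f]rval_row5 ev5_0 andbF.
  case f_z: (f \in pattrs z); last by case: rT => x ->; rewrite rval_row5 f_z.
  by apply/negbTE/(allP rL); rewrite mem_filter f_z.
- exists [:: query_chain (fun a => answer z (row z (sval a))) t L]; split=> //.
  by rewrite (leq_trans dG) // size_filter (leq_trans (count_size _ _)) ?size_map.
Qed.

Lemma det_tree_within_size z : valid_problem z ->
  exists G, [/\ det_tree G, tree_for (T5 z) G & depth G <= size (pattrs z)].
Proof.
move=> zP; rewrite -(size_map (fun a => (a, false))).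
apply: (det_tree_of_zero_path (t := answer z (row z 0))) => //.
  by split; [exists 0 | apply/allP => _ /mapP [a a_z ->]; rewrite /= rval_row5 ev5_0 andbF].
move=> r [[x ->] /allP r_false]; suff -> : row z x = row z 0 by apply: answer_valid.
apply/eq_in_map => a a_z; rewrite ev5_0.
by have /eqP := r_false _ (map_f (fun a => (a, false)) a_z); rewrite rval_row5 a_z.
Qed.

Lemma det_tree_of_tree z G : valid_problem z -> tree_for (T5 z) G ->
  exists G', [/\ det_tree G', tree_for (T5 z) G' & depth G' <= depth G].
Proof.
move=> zP [_ [_ [cover sound]]]; have [p pG p0] := cover _ (ex_intro _ 0 erefl).
have [G' [detG' G'T dG']] := det_tree_of_zero_path zP p0 (sound p pG).
by exists G'; split; rewrite // (leq_trans dG') ?path_size_le_depth.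
Qed.

Lemma det_tree_of_hval5 c z m : valid_problem z -> hval c (T5 z) m ->
  exists G, [/\ det_tree G, tree_for (T5 z) G & depth G <= m].
Proof.
move=> zP; case: c => /= [-> | [[G [detG GT <-]] _] | [[G [GT <-]] _]].
- exact: det_tree_within_size.
- by exists G.
- exact: det_tree_of_tree.
Qed.

Lemma hval_le5 b c z w m : valid_problem z -> (b = Mi -> c = Mi) ->
  hval b (T5 z) w -> hval c (T5 z) m -> w <= m.
Proof.
move=> zP; case: b => [/(_ erefl) -> bw cm | _ | _]; first by rewrite (hval_functional bw cm).
all: move=> bw /(det_tree_of_hval5 zP) [G [detG GT dG]].
all: exact: leq_trans (hval_le_det_depth _ bw detG GT) dG.
Qed.

Definition fS (k : nat) : attr5 := exist _ k.+1 (ltn0Sn k).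

Lemma fS_inj : injective fS.
Proof. by move=> i j /(congr1 val) [->]. Qed.

Definition or_problem (n : nat) : problem attr5 :=
  Problem [seq fS k | k <- iota 0 n] (fun d => if has id d then [:: 1] else [:: 0]).

Lemma has_row_or_problem n x : has id (row (or_problem n) x) = (0 < x <= n).
Proof.
rewrite !has_map; case: x => [|x]; first by apply/hasPn.
apply/hasP/idP => [[k] | x_n]; last by exists x; rewrite ?mem_iota //= /ev5 /=.
by rewrite mem_iota /= /ev5 /= eqSS => k_n /eqP <-.
Qed.

Lemma or_problem_lower n G : tree_for (T5 (or_problem n)) G -> n <= depth G.
Proof.
move=> [_ [_ [cover sound]]]; have [p pG p0] := cover _ (ex_intro _ 0 erefl).
have p2 : p.2 = 0 by move: (sound p pG _ p0); rewrite /= has_row_or_problem inE => /eqP.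
(* Otherwise the row of [k.+1] would follow the path of the all-0 row. *)
have queried k : k < n -> fS k \in map fst p.1.
  move=> k_n; apply: contraT => kN.
  have : p.2 \in pnu (or_problem n) (row (or_problem n) k.+1).
    apply: sound pG _ (in_sub_agree p0 (ex_intro _ k.+1 erefl) _) => f f_p.
    rewrite !rval_row5 ev5_0 andbF; apply/negbTE; apply: contra kN => /andP [_ /eqP f_k].
    by rewrite (_ : fS k = f) //; apply: val_inj.
  by rewrite [pnu _ _]/= has_row_or_problem k_n p2.
apply: leq_trans (path_size_le_depth pG).
rewrite -(size_map fst) -[n](size_iota 0) -(size_map fS).
apply: uniq_leq_size; first by rewrite (map_inj_uniq fS_inj) iota_uniq.
by move=> f /mapP [k]; rewrite mem_iota => k_n ->; apply: queried.
Qed.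

Lemma or_problem_valid n : 0 < n -> valid_problem (or_problem n).
Proof. by move=> n_gt0; split=> [|d _ /=]; [rewrite /= size_map size_iota | case: ifP]. Qed.

Lemma or_problem_hval b n : 0 < n -> hval b (T5 (or_problem n)) n.
Proof.
move=> n_gt0; have [G [detG GT dG]] := det_tree_within_size (or_problem_valid n_gt0).
have dGn : depth G = n.
  by apply/eqP; rewrite eqn_leq or_problem_lower // andbT; rewrite /= size_map size_iota in dG.
case: b => /=; first by rewrite size_map size_iota.
- by split=> [|G' _]; [exists G | apply: or_problem_lower].
- by split=> [|G']; [exists G | apply: or_problem_lower].
Qed.

End U5.

Theorem lemma13 : forall b c : measure, has_typ (U5 b c) (t5 b c).
Proof.
have gamma b c : (b = Mi -> c = Mi) -> has_typ (U5 b c) Tgamma.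
  move=> bc; apply: gamma_of_diag => n n_gt0; apply: Ufun_diag.
  - by exists (or_problem n); [apply: or_problem_valid | split; apply: or_problem_hval].
  - by move=> z w m zP; apply: hval_le5.
have epsilon c : c <> Mi -> has_typ (U5 Mi c) Tepsilon.
  by move=> cNi; exists 0 => n [v /(Ufun_i_undef (fS 0) cNi)].
by case=> [] [] /=; [apply: gamma | apply: epsilon | apply: epsilon | apply: gamma ..].
Qed.
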